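(* Let \[ A=\begin{pmatrix} a & \delta & \gamma \\ \bar\delta & b & \varepsilon \\ \bar\gamma & \bar\varepsilon & c\end{pmatrix} \] be a $3\times 3$ Hermitian matrix, where $a,b,c\in\mathbb{R}$ and $\gamma,\delta,\varepsilon\in\mathbb{C}$ are all non-zero. Then $A$ has an eigenvalue $\lambda$ of multiplicity at least $2$ if and only if \[ a-\frac{\bar\delta\gamma}{\varepsilon}=b-\frac{\delta\varepsilon}{\gamma}=c-\frac{\gamma\bar\varepsilon}{\delta}=\lambda\in\mathbb{R} \] (a system of three real equations). Moreover, when this holds, the remaining eigenvalue is $\lambda'=\operatorname{tr}(A)-2\lambda$, so the spectrum is $(\lambda,\lambda,\lambda')$, and $\lambda'>\lambda$ if and only if $\operatorname{Re}(\delta\varepsilon\bar\gamma)>0$.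
   Context: $\operatorname{tr}(A)$ denotes the trace of $A$, and a bar denotes complex conjugation. *)

From HB Require Import structures.
From mathcomp Require Import all_boot all_order all_algebra.
From mathcomp Require Import complex reals.
Set Implicit Arguments. Unset Strict Implicit. Unset Printing Implicit Defensive.
Import Order.TTheory GRing.Theory Num.Theory.
Local Open Scope ring_scope.

Definition herm3 (R : rcfType) (a b c : R) (gamma delta eps : R[i]) : 'M[R[i]]_3 :=
  \matrix_(i < 3, j < 3)
    nth 0 (nth [::] [:: [:: (a%:C)%C ; delta ; gamma ];
                        [:: delta^* ; (b%:C)%C ; eps ];
                        [:: gamma^* ; eps^* ; (c%:C)%C ] ] i) j.

Definition eig_mult (C : fieldType) (n : nat) (A : 'M[C]_n) (lambda : C) : nat :=
  mup lambda (char_poly A).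

(* Write x = a - l, y = b - l, z = c - l for the diagonal of A - l.  The
   characteristic polynomial X^3 - t X^2 + s X - d has l as a root of
   multiplicity at least 2 iff s and d take the values forced by the
   factorisation (X - l)^2 (X - (t - 2 l)).  As t, s, d are real, this forces l
   to be real, and the two conditions then say that the sum of the principal
   2x2 minors of A - l and det (A - l) vanish.  For real x, y, z the product of
   two principal minors is a squared modulus, such as |x eps - (conj delta) gamma|^2,
   plus a multiple of det (A - l); so the three minors are reals with sum 0 and
   nonnegative pairwise products, hence all 0, and the three squared moduli
   vanish: these are the three equations of the theorem.  Conversely the
   equations make every 2x2 minor of A - l vanish.  Finally they give
   x |eps|^2 = y |gamma|^2 = z |delta|^2 = delta eps (conj gamma), so
   l' - l = x + y + z = delta eps (conj gamma) (|eps|^-2 + |gamma|^-2 + |delta|^-2)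
   has the sign of Re (delta eps (conj gamma)). *)

From HB Require Import structures.
From mathcomp Require Import all_boot all_order all_algebra.
From mathcomp Require Import complex reals.
From mathcomp Require Import ring.
Import Order.TTheory GRing.Theory Num.Theory.
Local Open Scope ring_scope.

Lemma det_mx33 {R : comNzRingType} (M : 'M[R]_3) :
  \det M = M 0 0 * (M 1 1 * M 2 2 - M 1 2 * M 2 1)
         - M 0 1 * (M 1 0 * M 2 2 - M 1 2 * M 2 0)
         + M 0 2 * (M 1 0 * M 2 1 - M 1 1 * M 2 0).
Proof.
rewrite (expand_det_row _ 0) !big_ord_recl big_ord0 /cofactor.
rewrite !(expand_det_row _ 0) !big_ord_recl !big_ord0 /cofactor !det_mx11 !mxE /=.
(* Index M by nat, so that the lifted ordinals of the minors reduce to literals. *)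
have [Mn M_nat] : exists Mn : nat -> nat -> R, forall i j, M i j = Mn i j.
  by exists (fun i j => M (inord i) (inord j)) => i j; rewrite !inord_val.
rewrite !M_nat /=; ring.
Qed.

Lemma mup_ge2_deriv {F : fieldType} (p : {poly F}) (x : F) :
  p != 0 -> (2 <= mup x p)%N -> p.[x] = 0 /\ p^`().[x] = 0.
Proof.
move=> p_nz; rewrite mup_geq // => /dvdpP [q ->].
rewrite derivM deriv_exp derivXsubC !hornerE /= !subrr.
by rewrite expr1 add0r subrr !mulr0 addr0.
Qed.

Definition cubic {F : fieldType} (t s d : F) : {poly F} :=
  'X^3 - t%:P * 'X^2 + s%:P * 'X - d%:P.

Lemma cubic_double_factor {F : fieldType} (t l : F) :
  cubic t (2 * t * l - 3 * l ^+ 2) (t * l ^+ 2 - 2 * l ^+ 3)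
  = ('X - l%:P) ^+ 2 * ('X - (t - 2 * l)%:P).
Proof. by rewrite /cubic !rmorphB !rmorphM !rmorph_nat; ring. Qed.

Lemma cubic_double_rootP {F : fieldType} (t s d l : F) :
  (2 <= mup l (cubic t s d))%N <->
  s = 2 * t * l - 3 * l ^+ 2 /\ d = t * l ^+ 2 - 2 * l ^+ 3.
Proof.
split=> [|[-> ->]]; last first.
  rewrite cubic_double_factor mup_geq ?dvdp_mulIl //.
  by rewrite mulf_neq0 ?expf_neq0 ?polyXsubC_eq0.
have cubic_nz : cubic t s d != 0.
  apply: contraTneq isT => /(congr1 (coefp 3)) /=.
  by rewrite /cubic !coefE /= => /eqP; rewrite !(mulr0, subr0, addr0) oner_eq0.
move=> /(mup_ge2_deriv _ _ cubic_nz) [root_l root'_l].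
rewrite /cubic !(derivD, derivN, deriv_mulC, derivC, derivXn, derivX) !hornerE /=
  in root_l root'_l.
have s_eq : s = 2 * t * l - 3 * l ^+ 2 by rewrite -[LHS]subr0 -root'_l; ring.
by split=> //; rewrite -[d]addr0 -root_l s_eq; ring.
Qed.

Lemma cubic_double_root_real {C : numClosedFieldType} (t s d l : C) :
  t \is Num.real -> s \is Num.real -> d \is Num.real ->
  s = 2 * t * l - 3 * l ^+ 2 -> d = t * l ^+ 2 - 2 * l ^+ 3 -> l \is Num.real.
Proof.
move=> /CrealP tJ /CrealP sJ /CrealP dJ s_eq d_eq.
have s_eqJ : s = 2 * t * l^* - 3 * l^* ^+ 2.
  by rewrite -sJ {1}s_eq rmorphB !rmorphM !rmorph_nat /= tJ; ring.
have d_eqJ : d = t * l^* ^+ 2 - 2 * l^* ^+ 3.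
  by rewrite -dJ {1}d_eq rmorphB !rmorphM rmorph_nat /= tJ; ring.
(* The double-root equations hold at l and at conj l, and their differences
   combine into (l - conj l)^3. *)
have : (l - l^*) ^+ 3 = (l + l^*) * (s - s) - 2 * (d - d).
  by rewrite {1}s_eq s_eqJ {1}d_eq d_eqJ; ring.
rewrite !subrr !mulr0 subr0 => /eqP; rewrite expf_eq0 /= subr_eq0 => /eqP lJ.
exact/CrealP/esym.
Qed.

Lemma real_sum3_eq0_mul_ge0 {R : numDomainType} {u v w : R} :
  u \is Num.real -> u + v + w = 0 -> 0 <= u * v -> 0 <= u * w -> u = 0.
Proof.
move=> uR sum0 uv_ge0 uw_ge0; apply/eqP; rewrite -sqrf_eq0 eq_le.
rewrite real_exprn_even_ge0 // andbT.
have -> : u ^+ 2 = - (u * v + u * w).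
  by apply/eqP; rewrite -subr_eq0 opprK expr2 -!mulrDr addrA sum0 mulr0.
by rewrite oppr_le0 addr_ge0.
Qed.

Definition herm3_minors {C : numClosedFieldType} (x y z g d e : C) : C :=
  (y * z - e * e^*) + (x * z - g * g^*) + (x * y - d * d^*).

Definition herm3_det {C : numClosedFieldType} (x y z g d e : C) : C :=
  x * y * z + d * e * g^* + g * d^* * e^* - x * e * e^* - y * g * g^* - z * d * d^*.

Section Herm3Coefficients.
Context {C : numClosedFieldType} (g d e : C).
Local Notation minors x y z := (herm3_minors x y z g d e).
Local Notation det x y z := (herm3_det x y z g d e).

Lemma herm3_minors_shift (a b c l : C) :
  minors (a - l) (b - l) (c - l)
  = minors a b c - (2 * (a + b + c) * l - 3 * l ^+ 2).
Proof. by rewrite /herm3_minors; ring. Qed.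

Lemma herm3_det_shift (a b c l : C) :
  det (a - l) (b - l) (c - l) + l * minors (a - l) (b - l) (c - l)
  = det a b c - ((a + b + c) * l ^+ 2 - 2 * l ^+ 3).
Proof. by rewrite /herm3_det /herm3_minors; ring. Qed.

Lemma herm3_minors_real (a b c : C) :
  a \is Num.real -> b \is Num.real -> c \is Num.real -> minors a b c \is Num.real.
Proof.
move=> /CrealP aJ /CrealP bJ /CrealP cJ; apply/CrealP.
by rewrite /herm3_minors !(rmorphB, rmorphD, rmorphM) /= !conjCK aJ bJ cJ; ring.
Qed.

Lemma herm3_det_real (a b c : C) :
  a \is Num.real -> b \is Num.real -> c \is Num.real -> det a b c \is Num.real.
Proof.
move=> /CrealP aJ /CrealP bJ /CrealP cJ; apply/CrealP.
by rewrite /herm3_det !(rmorphB, rmorphD, rmorphM) /= !conjCK aJ bJ cJ; ring.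
Qed.

Section RealDiagonal.
Context {x y z : C}.
Hypotheses (xR : x \is Num.real) (yR : y \is Num.real) (zR : z \is Num.real).

Lemma herm3_minors_det_eq0 : g != 0 -> d != 0 ->
  x * e = d^* * g -> y * g = d * e -> z * d = g * e^* ->
  minors x y z = 0 /\ det x y z = 0.
Proof.
move=> g_nz d_nz xe yg zd.
have xeJ : x * e^* = d * g^*.
  by have := congr1 Num.conj xe; rewrite !rmorphM /= (CrealP xR) conjCK.
have ygJ : y * g^* = d^* * e^*.
  by have := congr1 Num.conj yg; rewrite !rmorphM /= (CrealP yR).
have zdJ : z * d^* = g^* * e.
  by have := congr1 Num.conj zd; rewrite !rmorphM /= (CrealP zR) conjCK.
have m1_0 : y * z - e * e^* = 0.
  apply: (mulIf d_nz); rewrite mul0r.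
  transitivity (y * (z * d - g * e^*) + e^* * (y * g - d * e)); first ring.
  by rewrite zd yg !subrr !mulr0 addr0.
have m2_0 : x * z - g * g^* = 0.
  apply: (mulIf d_nz); rewrite mul0r.
  transitivity (x * (z * d - g * e^*) + g * (x * e^* - d * g^*)); first ring.
  by rewrite zd xeJ !subrr !mulr0 addr0.
have m3_0 : x * y - d * d^* = 0.
  apply: (mulIf g_nz); rewrite mul0r.
  transitivity (x * (y * g - d * e) + d * (x * e - d^* * g)); first ring.
  by rewrite yg xe !subrr !mulr0 addr0.
split; first by rewrite /herm3_minors m1_0 m2_0 m3_0 !addr0.
transitivity (x * (y * z - e * e^*) - d * (z * d^* - g^* * e)
              + g * (d^* * e^* - y * g^*)); first by rewrite /herm3_det; ring.
by rewrite m1_0 zdJ ygJ !subrr !mulr0 subr0 addr0.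
Qed.

Lemma herm3_rel_of_minors_det_eq0 : minors x y z = 0 -> det x y z = 0 ->
  [/\ x * e = d^* * g, y * g = d * e & z * d = g * e^*].
Proof.
move=> sum0 det0.
have normR (u : C) : u * u^* \is Num.real by exact/ger0_real/mul_conjC_ge0.
set m1 := y * z - e * e^*; set m2 := x * z - g * g^*; set m3 := x * y - d * d^*.
have {}sum0 : m1 + m2 + m3 = 0 by [].
have m1R : m1 \is Num.real by rewrite rpredB ?normR ?rpredM.
have m2R : m2 \is Num.real by rewrite rpredB ?normR ?rpredM.
have m3R : m3 \is Num.real by rewrite rpredB ?normR ?rpredM.
have m23 : m2 * m3 = (x * e - d^* * g) * (x * e - d^* * g)^*.
  rewrite !rmorphB !rmorphM /= (CrealP xR) conjCK -[LHS]subr0 -(mulr0 x) -det0.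
  by rewrite /m2 /m3 /herm3_det; ring.
have m13 : m1 * m3 = (y * g - d * e) * (y * g - d * e)^*.
  rewrite !rmorphB !rmorphM /= (CrealP yR) -[LHS]subr0 -(mulr0 y) -det0.
  by rewrite /m1 /m3 /herm3_det; ring.
have m12 : m1 * m2 = (z * d - g * e^*) * (z * d - g * e^*)^*.
  rewrite !rmorphB !rmorphM /= (CrealP zR) conjCK -[LHS]subr0 -(mulr0 z) -det0.
  by rewrite /m1 /m2 /herm3_det; ring.
have m1_0 : m1 = 0.
  by apply: (real_sum3_eq0_mul_ge0 m1R sum0); rewrite ?m12 ?m13 mul_conjC_ge0.
have m2_0 : m2 = 0.
  apply: (real_sum3_eq0_mul_ge0 (v := m1) (w := m3) m2R).
  - by rewrite -sum0; ring.
  - by rewrite mulrC m12 mul_conjC_ge0.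
  - by rewrite m23 mul_conjC_ge0.
have m3_0 : m3 = 0 by move: sum0; rewrite m1_0 m2_0 !add0r.
move: m23 m13 m12; rewrite m1_0 m2_0 m3_0 !mul0r.
by do 3![move=> /esym/eqP; rewrite mul_conjC_eq0 subr_eq0 => /eqP ?].
Qed.

Lemma herm3_diag_sum_gt0 : g != 0 -> d != 0 -> e != 0 ->
  x * e = d^* * g -> y * g = d * e -> z * d = g * e^* ->
  0 < x + y + z <-> 0 < 'Re (d * e * g^*).
Proof.
move=> g_nz d_nz e_nz xe yg zd.
have xeJ : x * e^* = d * g^*.
  by have := congr1 Num.conj xe; rewrite !rmorphM /= (CrealP xR) conjCK.
have zdJ : z * d^* = g^* * e.
  by have := congr1 Num.conj zd; rewrite !rmorphM /= (CrealP zR) conjCK.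
set P := d * e * g^*.
have xP : x * (e * e^*) = P by rewrite mulrA mulrAC xeJ /P; ring.
have yP : y * (g * g^*) = P by rewrite mulrA yg.
have zP : z * (d * d^*) = P by rewrite mulrCA zdJ /P; ring.
have PR : P \is Num.real by rewrite -xP rpredM // ger0_real ?mul_conjC_ge0.
have sqn_gt0 (u : C) : u != 0 -> 0 < u * u^* by rewrite mul_conjC_gt0.
have sum_eq : x + y + z = P * ((e * e^*)^-1 + (g * g^*)^-1 + (d * d^*)^-1).
  by rewrite !mulrDr -{1}xP -{1}yP -{1}zP !mulfK // gt_eqF ?sqn_gt0.
rewrite (Creal_ReP _ PR) sum_eq pmulr_lgt0 //.
by do ![apply: addr_gt0 | rewrite invr_gt0 sqn_gt0].
Qed.

End RealDiagonal.

Lemma herm3_double_rootP {a b c : C} (l : C) :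
  a \is Num.real -> b \is Num.real -> c \is Num.real -> g != 0 -> d != 0 ->
  minors a b c = 2 * (a + b + c) * l - 3 * l ^+ 2 /\
  det a b c = (a + b + c) * l ^+ 2 - 2 * l ^+ 3 <->
  [/\ l \is Num.real, (a - l) * e = d^* * g, (b - l) * g = d * e
    & (c - l) * d = g * e^*].
Proof.
move=> aR bR cR g_nz d_nz; split=> [[s_eq d_eq] | [lR xe yg zd]].
  have lR : l \is Num.real.
    apply: cubic_double_root_real s_eq d_eq.
    - by rewrite !rpredD.
    - exact: herm3_minors_real.
    - exact: herm3_det_real.
  have minors0 : minors (a - l) (b - l) (c - l) = 0.
    by rewrite herm3_minors_shift s_eq subrr.
  have det0 : det (a - l) (b - l) (c - l) = 0.
    by have := herm3_det_shift a b c l; rewrite minors0 mulr0 addr0 d_eq subrr.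
  have [xR yR zR] := And3 (rpredB aR lR) (rpredB bR lR) (rpredB cR lR).
  by have [] := herm3_rel_of_minors_det_eq0 xR yR zR minors0 det0.
have [xR yR zR] := And3 (rpredB aR lR) (rpredB bR lR) (rpredB cR lR).
have [minors0 det0] := herm3_minors_det_eq0 xR yR zR g_nz d_nz xe yg zd.
split; apply/eqP; rewrite -subr_eq0.
  by rewrite -herm3_minors_shift minors0.
by rewrite -herm3_det_shift minors0 det0 mulr0 addr0.
Qed.

End Herm3Coefficients.

Lemma char_poly_herm3 {R : rcfType} (a b c : R) (g d e : R[i]) :
  char_poly (herm3 a b c g d e)
  = cubic (a%:C + b%:C + c%:C)%C (herm3_minors a%:C b%:C c%:C g d e)%C
          (herm3_det a%:C b%:C c%:C g d e)%C.
Proof.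
rewrite /char_poly /char_poly_mx det_mx33 !mxE /= /cubic /herm3_minors /herm3_det.
rewrite ?mulr1n ?mulr0n; ring.
Qed.

Lemma mxtrace_herm3 {R : rcfType} (a b c : R) (g d e : R[i]) :
  \tr (herm3 a b c g d e) = (a%:C + b%:C + c%:C)%C.
Proof. by rewrite /mxtrace !big_ord_recl big_ord0 !mxE /= addr0 addrA. Qed.

Lemma subr_div_eq {F : fieldType} (u v w l : F) :
  w != 0 -> u - v / w = l <-> (u - l) * w = v.
Proof.
move=> w_nz; split=> [<- | <-]; last by rewrite mulfK //; ring.
by rewrite opprB addrC subrK mulfVK.
Qed.

Theorem mainTheorem1 (R : realType) (a b c : R) (gamma delta eps : R[i])
  (hg : gamma != 0) (hd : delta != 0) (he : eps != 0) :
  let A := herm3 a b c gamma delta eps in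
  (forall lambda : R[i],
      (2 <= eig_mult A lambda)%N <->
      [/\ (a%:C)%C - delta^* * gamma / eps = lambda,
          (b%:C)%C - delta * eps / gamma = lambda,
          (c%:C)%C - gamma * eps^* / delta = lambda &
          lambda \is Num.real]) /\
  (forall lambda : R[i],
      (a%:C)%C - delta^* * gamma / eps = lambda ->
      (b%:C)%C - delta * eps / gamma = lambda ->
      (c%:C)%C - gamma * eps^* / delta = lambda ->
      lambda \is Num.real ->
      let lambda' := \tr A - 2%:R * lambda in
      char_poly A = ('X - lambda%:P) ^+ 2 * ('X - lambda'%:P) /\
      (lambda < lambda' <-> 0 < 'Re (delta * eps * gamma^*))).
Proof.
move=> A.
have realC (k : R) : (k%:C)%C \is Num.real by apply/complex_realP; exists k.
have double_rootP l := herm3_double_rootP gamma delta eps l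
  (realC a) (realC b) (realC c) hg hd.
split=> [l | l].
  rewrite /eig_mult char_poly_herm3 cubic_double_rootP double_rootP.
  split=> [[lR xe yg zd] | [/subr_div_eq-/(_ he) xe /subr_div_eq-/(_ hg) yg]].
    by split=> //; apply/subr_div_eq.
  by move=> /subr_div_eq-/(_ hd) zd lR.
move=> /subr_div_eq-/(_ he) xe /subr_div_eq-/(_ hg) yg /subr_div_eq-/(_ hd) zd lR.
have [s_eq d_eq] := (double_rootP l).2 (And4 lR xe yg zd).
rewrite /A mxtrace_herm3 char_poly_herm3 s_eq d_eq cubic_double_factor; split=> //.
rewrite -subr_gt0 (_ : _ - l = (a%:C - l) + (b%:C - l) + (c%:C - l))%C; last by ring.
by apply: herm3_diag_sum_gt0; rewrite ?rpredB ?realC.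
Qed.
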